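(* Let $r_2\geq 4$ be an even integer. Then there is no graph with parameters $(r_2,r_3)$ for any integer $r_3$ with $4\binom{r_2/2}{2}<r_3<\binom{r_2}{2}$ or $\binom{r_2-1}{2}<r_3<4\binom{r_2/2}{2}$. Moreover, $K_{r_2+1}$ has parameters $(r_2,\binom{r_2}{2})$, $\operatorname{Turan}(r_2+2, r_2/2+1)$ has parameters $(r_2, 4\binom{r_2/2}{2})$, and $K_{r_2}\square K_2$ has parameters $(r_2,\binom{r_2-1}{2})$.
   Context: All graphs are finite, simple and undirected. The $K_3$-degree of a vertex $v$ is the number of triangles containing $v$. A graph $G$ has parameters $(r_2,r_3)$ if every vertex has degree $r_2$ and every vertex has $K_3$-degree $r_3$. $K_n$ is the complete graph on $n$ vertices. For $r\mid n$, $\operatorname{Turan}(n,r)$ is the complete multipartite graph on $n$ vertices with $r$ parts each of size $n/r$. The Cartesian product $G_1\square G_2$ has vertex set $V(G_1)\times V(G_2)$, with $(u,v)$ and $(u',v')$ adjacent iff either $u=u'$ and $vv'\in E(G_2)$, or $v=v'$ and $uu'\in E(G_1)$. *)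

From mathcomp Require Import all_boot.
Set Implicit Arguments. Unset Strict Implicit. Unset Printing Implicit Defensive.

Definition simple_graph (T : finType) (e : rel T) : Prop :=
  symmetric e /\ irreflexive e.

Definition deg (T : finType) (e : rel T) (v : T) : nat := #|[set u | e v u]|.

Definition clique (T : finType) (e : rel T) (S : {set T}) : bool :=
  [forall x in S, forall y in S, (x != y) ==> e x y].

Definition k3deg (T : finType) (e : rel T) (v : T) : nat :=
  #|[set S : {set T} | [&& #|S| == 3, v \in S & clique e S]]|.

Definition has_params (T : finType) (e : rel T) (r2 r3 : nat) : Prop :=
  forall v : T, deg e v = r2 /\ k3deg e v = r3.

Definition complete_graph (n : nat) : rel 'I_n := fun x y => x != y.

(* Turan(n, r): complete multipartite, parts {k*s, ..., k*s + s - 1}, s = n/r *)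
Definition turan (n r : nat) : rel 'I_n :=
  fun x y => (x %/ (n %/ r)) != (y %/ (n %/ r)).

Definition cartesian (T1 T2 : finType) (e1 : rel T1) (e2 : rel T2) : rel (T1 * T2) :=
  fun p q => ((p.1 == q.1) && e2 p.2 q.2) || ((p.2 == q.2) && e1 p.1 q.1).
Arguments complete_graph n : clear implicits.
Arguments turan n r : clear implicits.

(* For a vertex v, the neighbourhood N(v) spans d = r2 vertices and r3 edges,
   so it contains M = d(d-1) - 2 r3 ordered non-adjacent pairs, independently
   of v.  If r3 > C(d-1,2), i.e. M < 2(d-1), counting non-adjacent pairs in
   the neighbourhoods of w, v and x shows that non-adjacent vertices v, x with
   a common neighbour w satisfy N(v) = N(x).  Then, for every b in N(v), the
   neighbours of b outside N(v) are exactly the c vertices z with N(z) = N(v),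
   so M = d(c-1).  A multiple of d strictly between 0 and 2(d-1) equals d,
   which forces r3 = 4 C(d/2,2).  The three examples are instances of the
   formulas for complete multipartite graphs and for Cartesian products. *)

From mathcomp Require Import all_boot zify.
Set Implicit Arguments. Unset Strict Implicit. Unset Printing Implicit Defensive.

Lemma card_set_sum (T : finType) (A : {pred T}) (P : pred T) :
  #|[set x in A | P x]| = \sum_(x in A) P x.
Proof. by rewrite -sum1dep_card big_mkcondr. Qed.

Lemma bin2_muln2 n : 'C(n, 2) * 2 = n * (n - 1).
Proof. by rewrite (bin_ffact n 2) ffactnS ffactn1 subn1. Qed.

Lemma bin2_pred n : 'C(n, 2) = 'C(n - 1, 2) + (n - 1).
Proof. by case: n => [|n] //; rewrite binS bin1 subn1. Qed.

Lemma bin2_even k : 'C(k * 2, 2) = 4 * 'C(k, 2) + k.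
Proof. have := bin2_muln2 (k * 2); have := bin2_muln2 k; nia. Qed.

Lemma card_setD2 (T : finType) (S : {set T}) v x :
  v \in S -> x \in S -> x != v -> #|S :\: [set v; x]| + 2 = #|S|.
Proof.
move=> vS xS xv; rewrite -(cardsID [set v; x] S) (setIidPr _).
  by rewrite cards2 (eq_sym v) xv addnC.
by apply/subsetP => z; rewrite !inE => /orP [] /eqP ->.
Qed.

Section SimpleGraph.

Variables (T : finType) (e : rel T).
Hypotheses (e_sym : symmetric e) (e_irr : irreflexive e).

Definition nb (v : T) : {set T} := [set u | e v u].

Definition triangles (v : T) : {set {set T}} :=
  [set S : {set T} | [&& #|S| == 3, v \in S & clique e S]].

Lemma cliqueP (S : {set T}) :
  reflect {in S &, forall x y, x != y -> e x y} (clique e S).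
Proof.
apply: (iffP forall_inP) => [cl x y xS yS | cl x xS].
  by move/forall_inP: (cl x xS) => /(_ y yS) /implyP.
by apply/forall_inP => y yS; apply/implyP; apply: cl.
Qed.

Lemma triangle_on_edge v a b : e v a -> e v b -> e a b ->
  [set v; a; b] \in triangles v.
Proof.
move=> va vb ab.
have neq x y : e x y -> x != y by apply: contraTneq => ->; rewrite e_irr.
rewrite !inE eqxx /=; apply/andP; split.
  rewrite -setUA cardsU1 cards2 !inE neq // negb_or !neq //.
apply/cliqueP => x y; rewrite !inE -!orbA.
by move=> /or3P [] /eqP -> /or3P [] /eqP ->; rewrite ?eqxx // => _; rewrite // e_sym.
Qed.

Lemma triangles_through_edge v a : e v a ->
  [set S in triangles v | a \in S] = (fun b => [set v; a; b]) @: (nb v :&: nb a).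
Proof.
move=> va; apply/setP => S; apply/idP/imsetP => [|[b]].
  rewrite !inE => /andP [/and3P [/eqP S3 vS cl] aS].
  have av : a != v by apply: contraTneq va => ->; rewrite e_irr.
  have /cards1P [b Sb] : #|S :\ v :\ a| == 1.
    by move: S3; rewrite (cardsD1 v) vS (cardsD1 a) !inE av aS; lia.
  have : b \in S :\ v :\ a by rewrite Sb set11.
  rewrite !inE => /and3P [ba bv bS].
  exists b; first by rewrite !inE !(cliqueP _ cl) // eq_sym.
  apply/setP => z; rewrite !inE; case: (eqVneq z v) => [-> //|zv].
  case: (eqVneq z a) => [-> //|za] /=.
  apply/idP/eqP => [zS | -> //]; apply/set1P.
  by rewrite -Sb !inE zv za.
move=> /setIP [vb ab] ->; rewrite !inE in vb ab; apply/setIdP; split.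
  exact: triangle_on_edge.
by rewrite !inE eqxx /= orbT.
Qed.

Lemma k3deg_double v : (k3deg e v).*2 = \sum_(a in nb v) #|nb v :&: nb a|.
Proof.
have card_through a : a \in nb v ->
    #|nb v :&: nb a| = \sum_(S in triangles v) (a \in S).
  rewrite inE => va; rewrite -card_set_sum triangles_through_edge //.
  rewrite card_in_imset // => b b' /setIP [vb ab] _ eq_b.
  have : b \in [set v; a; b'] by rewrite -eq_b !inE eqxx !orbT.
  rewrite !inE -orbA => /or3P [] /eqP // bE;
    by move: vb ab; rewrite bE !inE e_irr // andbF.
rewrite (eq_bigr _ card_through) exchange_big -muln2 -sum_nat_const /=.
apply: eq_bigr => S; rewrite inE => /and3P [/eqP S3 vS /cliqueP cl].
rewrite -card_set_sum (_ : [set a in nb v | a \in S] = S :\ v).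
  by move: S3; rewrite (cardsD1 v) vS; lia.
apply/setP => a; rewrite !inE; case: (boolP (a \in S)) => aS; rewrite ?andbT ?andbF //.
apply/idP/idP => [va | av]; last by apply: cl; rewrite // eq_sym.
by apply: contraTneq va => ->; rewrite e_irr.
Qed.

Definition nonadj (S : {set T}) (a : T) : {set T} :=
  [set b in S | (b != a) && ~~ e a b].

Definition nonedges (S : {set T}) : nat :=
  #|[set p : T * T | (p.1 \in S) && (p.2 \in nonadj S p.1)]|.

Lemma card_nonadj (S : {set T}) a : a \in S -> #|S :&: nb a| + #|nonadj S a| = #|S| - 1.
Proof.
move=> aS; rewrite (cardsD1 a S) aS add1n subn1 /= -(cardsID (nb a) (S :\ a)).
congr (_ + _); apply: eq_card => b; rewrite !inE.
  by case: (eqVneq b a) => [->|]; rewrite ?e_irr ?andbF.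
by case: (b \in S); case: (b != a); case: (e a b).
Qed.

Lemma sum_card_nonadj (A : {pred T}) (S : {set T}) :
  \sum_(a in A) #|nonadj S a| =
  #|[set p : T * T | (p.1 \in A) && (p.2 \in nonadj S p.1)]|.
Proof.
rewrite -sum1dep_card.
rewrite -(pair_big_dep (mem A) (fun a b => b \in nonadj S a) (fun _ _ => 1)) /=.
by apply: eq_bigr => a _; rewrite sum1_card.
Qed.

Lemma nonedgesE (S : {set T}) : nonedges S = \sum_(a in S) #|nonadj S a|.
Proof. by rewrite sum_card_nonadj. Qed.

Lemma nonedges_le (S : {set T}) : nonedges S <= #|S| * (#|S| - 1).
Proof.
rewrite nonedgesE -sum_nat_const; apply: leq_sum => a aS.
by rewrite -(card_nonadj aS) leq_addl.
Qed.

Lemma nonedges_link v :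
  nonedges (nb v) + (k3deg e v).*2 = #|nb v| * (#|nb v| - 1).
Proof.
rewrite nonedgesE k3deg_double -big_split -sum_nat_const /=.
by apply: eq_bigr => a va; rewrite addnC card_nonadj.
Qed.

Lemma nonedges_cover (A S1 S2 : {set T}) : A \subset S1 :&: S2 ->
  (\sum_(a in A) #|nonadj (S1 :|: S2) a|).*2 <= nonedges S1 + nonedges S2.
Proof.
(* A pair with one end in A lies in S1 or in S2; with both ends in A it lies in both. *)
move=> sA; rewrite sum_card_nonadj; set U := S1 :|: S2; set X := [set p | _].
pose Y := [set p : T * T | (p.2 \in A) && (p.1 \in nonadj U p.2)].
have swapK : involutive (fun p : T * T => (p.2, p.1)) by case.
have cardY : #|Y| = #|X|.
  rewrite -(card_preimset X (inv_inj swapK)).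
  by apply: eq_card => -[a b]; rewrite !inE.
rewrite -addnn -{2}cardY -cardsUI -[nonedges S1 + _]cardsUI.
have inS x : (x \in A) ==> (x \in S1) && (x \in S2).
  by apply/implyP => /(subsetP sA); rewrite inE.
apply: leq_add; apply: subset_leq_card; apply/subsetP => -[a b];
  move: (inS a) (inS b); rewrite !inE /= [e b a]e_sym [a == b]eq_sym;
  by case: (a \in A); case: (b \in A); case: (a \in S1); case: (a \in S2);
    case: (b \in S1); case: (b \in S2); case: (b == a); case: (e a b).
Qed.

Definition twins (v : T) : {set T} := [set z | nb z == nb v].

Section RegularSparseLinks.

Variable d : nat.
Hypothesis deg_d : forall v, #|nb v| = d.
Hypothesis sparse_links : forall v, nonedges (nb v) < 2 * (d - 1).

Lemma common_nb_gt1 v x w : x != v -> ~~ e v x -> e w v -> e w x ->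
  1 < #|nb v :&: nb x|.
Proof.
move=> xv vx wv wx; have [vw xw] : v \in nb w /\ x \in nb w by rewrite !inE.
have nonadj_vx : #|nonadj (nb w) v| + #|nonadj (nb w) x| < d.
  have vx_sub : [set v; x] \subset nb w.
    by apply/subsetP => z; rewrite !inE => /orP [] /eqP ->.
  have := @nonedges_cover [set v; x] (nb w) [set v; x].
  rewrite subsetI vx_sub subxx (setUidPl vx_sub) big_setU1 ?big_set1 ?inE 1?eq_sym //=.
  have := nonedges_le [set v; x]; rewrite cards2 eq_sym xv.
  by have := sparse_links w; lia.
have := card_nonadj vw; have := card_nonadj xw; rewrite deg_d.
set A := nb w :&: nb v; set B := nb w :&: nb x => cardB cardA.
have cardU : #|A :|: B| + 2 <= d.
  rewrite -(deg_d w) -(card_setD2 vw xw xv) leq_add2r; apply/subset_leq_card/subsetP => z.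
  rewrite !inE => /orP [] /andP [-> nz]; rewrite andbT;
    by apply: contraTN nz => /orP [] /eqP ->; rewrite ?e_irr // e_sym.
have cardI : #|A :&: B| < #|nb v :&: nb x|.
  have wvx : w \in nb v :&: nb x by rewrite !inE ![e _ w]e_sym wv wx.
  rewrite (cardsD1 w (nb v :&: nb x)) wvx add1n ltnS; apply/subset_leq_card/subsetP => z.
  rewrite !inE => /andP [/andP [wz ->] /andP [_ ->]]; rewrite !andbT.
  by apply: contraTneq wz => ->; rewrite e_irr.
have := cardsUI A B; clear -cardA cardB nonadj_vx cardU cardI; lia.
Qed.

Lemma common_nb_card_bound v x : x != v -> ~~ e v x ->
  #|nb v :&: nb x| * (d - #|nb v :&: nb x| + 1) < 2 * (d - 1).
Proof.
move=> xv vx; set P := nb v :&: nb x; set U := nb v :|: nb x.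
have cardU : #|U| + #|P| = d + d by rewrite cardsUI !deg_d.
have nonadj_lb a : a \in P -> d - #|P| + 1 <= #|nonadj U a|.
  move=> aP; have [va xa] : e v a /\ e x a by move: aP; rewrite !inE => /andP.
  have [av ax] : v \in nb a /\ x \in nb a by rewrite !inE ![e a _]e_sym.
  (* v and x are neighbours of a outside U *)
  have cardUa : #|U :&: nb a| + 2 <= d.
    rewrite -(deg_d a) -(card_setD2 av ax xv) leq_add2r.
    apply/subset_leq_card/subsetP => z; rewrite !inE => /andP [Uz ->]; rewrite andbT.
    by apply: contraL Uz => /orP [] /eqP ->; rewrite e_irr /= ?orbF // e_sym.
  have : #|P| <= d by rewrite -(deg_d v) subset_leq_card ?subsetIl.
  by have := @card_nonadj U a; rewrite !inE va => /(_ isT); lia.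
have := @nonedges_cover P (nb v) (nb x) (subxx _); rewrite -/U.
have : #|P| * (d - #|P| + 1) <= \sum_(a in P) #|nonadj U a|.
  by rewrite -sum_nat_const; apply: leq_sum.
by have := sparse_links v; have := sparse_links x; lia.
Qed.

Lemma nb_eq_of_common_nb v x w : x != v -> ~~ e v x -> e w v -> e w x ->
  nb v = nb x.
Proof.
move=> xv vx wv wx; have := common_nb_gt1 xv vx wv wx.
have := common_nb_card_bound xv vx.
have : #|nb v :&: nb x| <= d by rewrite -(deg_d v) subset_leq_card ?subsetIl.
(* With p := #|nb v :&: nb x|, p (d - p + 1) - 2 (d - 1) = (p - 2) (d - 1 - p). *)
move=> p_le p_bound p_gt1; have p_eq : #|nb v :&: nb x| = d by nia.
have /setIidPl sub_vx : nb v :&: nb x = nb v.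
  by apply/eqP; rewrite eqEcard subsetIl p_eq deg_d leqnn.
by apply/eqP; rewrite eqEcard sub_vx !deg_d leqnn.
Qed.

Lemma nbD_twins v b : e v b -> nb b :\: nb v = twins v.
Proof.
move=> vb; apply/setP => z; rewrite !inE; apply/idP/idP.
  case/andP => vz bz; case: (eqVneq z v) => [-> //| zv].
  by rewrite (nb_eq_of_common_nb zv vz _ bz) // e_sym.
move/eqP/setP => nbz; move: (nbz z) (nbz b); rewrite !inE e_irr => <-.
by rewrite e_sym => ->.
Qed.

Lemma card_nonadj_link v b : e v b -> #|nonadj (nb v) b| = #|twins v| - 1.
Proof.
move=> vb; have := @card_nonadj (nb v) b; rewrite inE vb => /(_ isT).
by have := cardsID (nb v) (nb b); rewrite nbD_twins // setIC !deg_d; lia.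
Qed.

Lemma nonedges_link_twins v : nonedges (nb v) = d * (#|twins v| - 1).
Proof.
rewrite nonedgesE -(deg_d v) -sum_nat_const.
by apply: eq_bigr => b; rewrite inE; apply: card_nonadj_link.
Qed.

End RegularSparseLinks.

Lemma regular_k3deg_gap d r3 : has_params e d r3 -> 0 < #|T| ->
  'C(d - 1, 2) < r3 < 'C(d, 2) -> r3.*2 + d = d * (d - 1).
Proof.
move=> params /card_gt0P [v _] /andP [r3_gt r3_lt].
have deg_d u : #|nb u| = d by case: (params u).
have link u : nonedges (nb u) + r3.*2 = d * (d - 1).
  by have [_ <-] := params u; rewrite -(deg_d u) nonedges_link.
have := bin2_muln2 d; have := bin2_pred d => bin_pred bin_d.
have sparse u : nonedges (nb u) < 2 * (d - 1) by have := link u; lia.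
have := link v; rewrite (nonedges_link_twins deg_d sparse v).
by case: (_ - 1) => [|[|c]]; rewrite ?muln0 ?muln1 ?mulnS; lia.
Qed.

Section Multipartite.

Variables (K : eqType) (f : T -> K) (s : nat).
Hypothesis e_f : forall x y, e x y = (f x != f y).
Hypothesis class_card : forall v, #|[set u | f u == f v]| = s.

Lemma nb_multipartite v : nb v = ~: [set u | f u == f v].
Proof. by apply/setP => u; rewrite !inE e_f eq_sym. Qed.

Lemma deg_multipartite v : #|nb v| = #|T| - s.
Proof. by rewrite nb_multipartite cardsCs setCK class_card. Qed.

Lemma k3deg_multipartite v : (k3deg e v).*2 = (#|T| - s) * (#|T| - s.*2).
Proof.
rewrite k3deg_double -(deg_multipartite v) -sum_nat_const.
apply: eq_bigr => a; rewrite inE e_f => fva.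
rewrite !nb_multipartite -setCU cardsCs setCK.
have := cardsUI [set u | f u == f v] [set u | f u == f a].
rewrite !class_card (_ : _ :&: _ = set0) ?cards0; first lia.
apply/setP => u; rewrite !inE; apply: contraNF fva => /andP [/eqP <- /eqP ->].
exact: eqxx.
Qed.

End Multipartite.

End SimpleGraph.

Section Cartesian.

Variables (T1 T2 : finType) (e1 : rel T1) (e2 : rel T2).
Hypotheses (e1_sym : symmetric e1) (e1_irr : irreflexive e1).
Hypotheses (e2_sym : symmetric e2) (e2_irr : irreflexive e2).

Lemma cartesian_sym : symmetric (cartesian e1 e2).
Proof. by move=> p q; rewrite /cartesian e1_sym e2_sym (eq_sym p.1) (eq_sym p.2). Qed.

Lemma cartesian_irr : irreflexive (cartesian e1 e2).
Proof. by move=> p; rewrite /cartesian e1_irr e2_irr !andbF. Qed.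

Lemma nb_cartesian u w : nb (cartesian e1 e2) (u, w) =
  setX (nb e1 u) [set w] :|: setX [set u] (nb e2 w).
Proof.
apply/setP => -[u' w']; rewrite !inE /cartesian /= (eq_sym w') (eq_sym u').
by case: (u == u'); case: (w == w'); case: (e1 u u'); case: (e2 w w').
Qed.

Lemma disjoint_nb_cartesian u w :
  [disjoint setX (nb e1 u) [set w] & setX [set u] (nb e2 w)].
Proof.
rewrite -setI_eq0; apply/eqP/setP => -[u' w']; rewrite !inE.
by apply/negP => /andP [/andP [uu' _] /andP [/eqP u'E _]]; rewrite u'E e1_irr in uu'.
Qed.

Lemma deg_cartesian u w :
  #|nb (cartesian e1 e2) (u, w)| = #|nb e1 u| + #|nb e2 w|.
Proof.
rewrite nb_cartesian cardsU (disjoint_setI0 (disjoint_nb_cartesian u w)).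
by rewrite cards0 subn0 !cardsX !cards1 muln1 mul1n.
Qed.

Lemma common_nb_cartesian_l u u' w : e1 u u' ->
  nb (cartesian e1 e2) (u, w) :&: nb (cartesian e1 e2) (u', w) =
  setX (nb e1 u :&: nb e1 u') [set w].
Proof.
move=> uu'; apply/setP => -[z1 z2]; rewrite !inE /cartesian /= (eq_sym w z2).
case: (eqVneq z2 w) => [->|_] /=; first by rewrite e2_irr !andbF /= andbT.
rewrite !andbF !orbF; apply/negP => /andP [/andP [/eqP uz _] /andP [/eqP u'z _]].
by move: uu'; rewrite uz u'z e1_irr.
Qed.

Lemma common_nb_cartesian_r u w w' : e2 w w' ->
  nb (cartesian e1 e2) (u, w) :&: nb (cartesian e1 e2) (u, w') =
  setX [set u] (nb e2 w :&: nb e2 w').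
Proof.
move=> ww'; apply/setP => -[z1 z2]; rewrite !inE /cartesian /= (eq_sym u z1).
case: (eqVneq z1 u) => [->|_] /=; first by rewrite e1_irr !andbF !orbF.
apply/negP => /and3P [/andP [/eqP wz _] /eqP w'z _].
by move: ww'; rewrite wz w'z e2_irr.
Qed.

Lemma sum_setX (A1 : {set T1}) (A2 : {set T2}) (F : T1 * T2 -> nat) :
  \sum_(p in setX A1 A2) F p = \sum_(u in A1) \sum_(w in A2) F (u, w).
Proof. by rewrite pair_big_dep; apply: eq_big => -[u w] //; rewrite in_setX. Qed.

Lemma k3deg_cartesian u w :
  k3deg (cartesian e1 e2) (u, w) = k3deg e1 u + k3deg e2 w.
Proof.
apply: double_inj; rewrite doubleD (k3deg_double cartesian_sym cartesian_irr).
rewrite (k3deg_double e1_sym e1_irr) (k3deg_double e2_sym e2_irr).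
rewrite (eq_bigl [predU setX (nb e1 u) [set w] & setX [set u] (nb e2 w)]); last first.
  by move=> a; rewrite nb_cartesian !inE.
rewrite bigU ?disjoint_nb_cartesian // !sum_setX big_set1.
congr (_ + _); apply: eq_bigr => z; rewrite inE => ez; rewrite ?big_set1.
  by rewrite common_nb_cartesian_l // cardsX cards1 muln1.
by rewrite common_nb_cartesian_r // cardsX cards1 mul1n.
Qed.

Lemma has_params_cartesian d1 d2 r1 r2 :
  has_params e1 d1 r1 -> has_params e2 d2 r2 ->
  has_params (cartesian e1 e2) (d1 + d2) (r1 + r2).
Proof.
move=> params1 params2 [u w]; have [deg1 k3_1] := params1 u.
have [deg2 k3_2] := params2 w.
by rewrite /deg -/(nb _ _) deg_cartesian k3deg_cartesian -deg1 -deg2 -k3_1 -k3_2.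
Qed.

End Cartesian.

Lemma complete_graph_sym n : symmetric (complete_graph n).
Proof. by move=> x y; rewrite /complete_graph eq_sym. Qed.

Lemma complete_graph_irr n : irreflexive (complete_graph n).
Proof. by move=> x; rewrite /complete_graph eqxx. Qed.

Lemma complete_params n : has_params (complete_graph n) (n - 1) 'C(n - 1, 2).
Proof.
have e_sym := @complete_graph_sym n; have e_irr := @complete_graph_irr n.
have e_id x y : complete_graph n x y = (id x != id y) by [].
have class1 (v : 'I_n) : #|[set u | id u == id v]| = 1.
  by rewrite (_ : [set u | _] = [set v]) ?cards1 //; apply/setP => u; rewrite !inE.
move=> v; split.
  by rewrite /deg -/(nb _ v) (deg_multipartite e_id class1) card_ord.
have := k3deg_multipartite e_sym e_irr e_id class1 v; rewrite card_ord.
have := bin2_muln2 (n - 1); rewrite -subnDA; lia.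
Qed.

Lemma card_half_class n (v : 'I_n) : ~~ odd n ->
  #|[set u : 'I_n | u %/ 2 == v %/ 2]| = 2.
Proof.
move=> n_even; have v_lt := ltn_ord v.
have n2 : n = n %/ 2 * 2 by rewrite divnK // dvdn2.
have lt0 : v %/ 2 * 2 < n by lia.
have lt1 : v %/ 2 * 2 + 1 < n by lia.
rewrite (_ : [set u | _] = [set Ordinal lt0; Ordinal lt1]).
  by rewrite cards2 -val_eqE /=; case: eqP => //; lia.
by apply/setP => u; rewrite !inE -!val_eqE /=; lia.
Qed.

Lemma turan_params r2 : ~~ odd r2 ->
  has_params (turan (r2 + 2) (r2 %/ 2 + 1)) r2 (4 * 'C(r2 %/ 2, 2)).
Proof.
move=> r2_even; set k := r2 %/ 2; set e := turan _ _.
have r2E : r2 = k * 2 by rewrite divnK // dvdn2.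
have part : (r2 + 2) %/ (k + 1) = 2 by rewrite r2E -mulSnr -addn1 mulKn ?addn1.
pose f (x : 'I_(r2 + 2)) := x %/ ((r2 + 2) %/ (k + 1)).
have e_f x y : e x y = (f x != f y) by [].
have e_sym : symmetric e by move=> x y; rewrite !e_f eq_sym.
have e_irr : irreflexive e by move=> x; rewrite e_f eqxx.
have class2 v : #|[set u | f u == f v]| = 2.
  by rewrite /f part card_half_class // addn2 /= r2_even.
move=> v; split.
  by rewrite /deg -/(nb _ v) (deg_multipartite e_f class2) card_ord addnK.
have := k3deg_multipartite e_sym e_irr e_f class2 v; rewrite card_ord addnK.
move: (k3deg e v) => t; have := bin2_muln2 k; rewrite r2E; nia.
Qed.

Unset Implicit Arguments.

Theorem corollary5p1 (r2 : nat) (Heven : ~~ odd r2) (H4 : 4 <= r2) :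
  (forall r3 : nat,
      (4 * 'C(r2 %/ 2, 2) < r3 < 'C(r2, 2)) || ('C(r2 - 1, 2) < r3 < 4 * 'C(r2 %/ 2, 2)) ->
      forall (T : finType) (e : rel T), simple_graph e -> 0 < #|T| ->
        ~ has_params e r2 r3)
  /\ has_params (complete_graph r2.+1) r2 'C(r2, 2)
  /\ has_params (turan (r2 + 2) (r2 %/ 2 + 1)) r2 (4 * 'C(r2 %/ 2, 2))
  /\ has_params (cartesian (complete_graph r2) (complete_graph 2)) r2 'C(r2 - 1, 2).
Proof.
have r2E : r2 = r2 %/ 2 * 2 by rewrite divnK // dvdn2.
have bin_r2 : 'C(r2, 2) = 4 * 'C(r2 %/ 2, 2) + r2 %/ 2 by rewrite {1}r2E bin2_even.
have := bin2_pred r2; have := bin2_muln2 r2 => bin2_r2 pascal_r2.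
split.
  move=> r3 r3_range T e [e_sym e_irr] T_gt0 params.
  have in_range : 'C(r2 - 1, 2) < r3 < 'C(r2, 2).
    by case/orP: r3_range => /andP [lo hi]; apply/andP; split; lia.
  have := regular_k3deg_gap e_sym e_irr params T_gt0 in_range.
  by case/orP: r3_range => /andP [lo hi]; lia.
split; first by have := @complete_params r2.+1; rewrite subSS subn0.
split; first exact: @turan_params r2 Heven.
have := has_params_cartesian (@complete_graph_sym r2) (@complete_graph_irr r2)
  (@complete_graph_sym 2) (@complete_graph_irr 2)
  (@complete_params r2) (@complete_params 2).
by rewrite /= addn0 subnK // (leq_trans _ H4).
Qed.
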